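(* Let $B$ be a finite set of Boolean functions. Then there exists an MSO formula $\theta_{\mathit{imp}}$ over the vocabulary $\tau_{B,\mathit{imp}}$ such that for every set $\Gamma$ of propositional $B$-formulae and all $F,G\subseteq\Gamma$ it holds that $F\models G$ if and only if $\mathcal{A}_{F,G}\models\theta_{\mathit{imp}}$.
   Context: For a finite set $B$ of Boolean functions, a $B$-formula is a propositional formula built from propositional variables by applying functions $f\in B$ (0-ary functions act as constants). $F\models G$ means every assignment satisfying all formulae of $F$ satisfies all formulae of $G$. Let $\tau_B$ consist of a unary symbol $\mathrm{const}_f$ for each 0-ary $f\in B$ and a binary symbol $\mathrm{conn}_{f,i}$ for each $f\in B$, $1\le i\le\mathrm{arity}(f)$; let $\tau_{B,\mathit{imp}}=\tau_B\cup\{\mathrm{var},\mathrm{repr},\mathrm{reprPrem},\mathrm{reprConc}\}$, all new symbols unary. For sets $F,G$ of $B$-formulae, $\mathcal{A}_{F,G}$ is the $\tau_{B,\mathit{imp}}$-structure whose universe is the set of subformulae of formulae in $F\cup G$, where $\mathrm{var}(x)$ holds iff $x$ is a variable, $\mathrm{repr}(x)$ iff $x\in F\cup G$, $\mathrm{const}_f(x)$ iff $x$ is the constant $f$, $\mathrm{conn}_{f,i}(x,y)$ iff $x$ is the $i$-th argument of the function $f$ at the root of $y$, $\mathrm{reprPrem}(x)$ iff $x\in F$, and $\mathrm{reprConc}(x)$ iff $x\in G$. *)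

From mathcomp Require Import all_boot.
From Stdlib Require List.
Set Implicit Arguments. Unset Strict Implicit. Unset Printing Implicit Defensive.

Definition boolfun : Type := {n : nat & {ffun n.-tuple bool -> bool}}.
Definition bf_arity (f : boolfun) : nat := projT1 f.

Definition bf_apply (f : boolfun) (s : seq bool) : bool :=
  match (insub s : option ((bf_arity f).-tuple bool)) with
  | Some t => projT2 f t
  | None => false
  end.

Inductive form : Type :=
| Var (v : nat)
| App (f : boolfun) (args : seq form).

Fixpoint is_Bform (B : seq boolfun) (phi : form) : Prop :=
  match phi with
  | Var _ => True
  | App f args =>
      f \in B /\ size args = bf_arity f /\
      (fix all_B (l : seq form) : Prop :=
         match l with nil => True | a :: l' => is_Bform B a /\ all_B l' end) args
  end.

Fixpoint eval (sigma : nat -> bool) (phi : form) : bool :=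
  match phi with
  | Var v => sigma v
  | App f args => bf_apply f (map (eval sigma) args)
  end.

Definition entails (F G : seq form) : Prop :=
  forall sigma : nat -> bool,
    (forall phi, List.In phi F -> eval sigma phi) ->
    (forall psi, List.In psi G -> eval sigma psi).

Inductive subf : form -> form -> Prop :=
| subf_refl x : subf x x
| subf_arg x f args a : List.In a args -> subf x a -> subf x (App f args).

Inductive sym : Type :=
| SConst (f : boolfun)
| SConn (f : boolfun) (i : nat)
| SVar | SRepr | SReprPrem | SReprConc.

Definition in_voc1 (B : seq boolfun) (s : sym) : Prop :=
  match s with
  | SConst f => f \in B /\ bf_arity f = 0
  | SConn _ _ => False
  | _ => True
  end.

Definition in_voc2 (B : seq boolfun) (s : sym) : Prop :=
  match s with
  | SConn f i => f \in B /\ 1 <= i <= bf_arity f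
  | _ => False
  end.

Inductive mso : Type :=
| MRel1 (s : sym) (x : nat)
| MRel2 (s : sym) (x y : nat)
| MEq (x y : nat)
| MIn (x X : nat)
| MTrue | MFalse
| MNot (p : mso)
| MAnd (p q : mso)
| MOr (p q : mso)
| MImp (p q : mso)
| MEx1 (x : nat) (p : mso)
| MAll1 (x : nat) (p : mso)
| MEx2 (X : nat) (p : mso)
| MAll2 (X : nat) (p : mso).

Fixpoint mso_wf (B : seq boolfun) (p : mso) : Prop :=
  match p with
  | MRel1 s _ => in_voc1 B s
  | MRel2 s _ _ => in_voc2 B s
  | MEq _ _ | MIn _ _ | MTrue | MFalse => True
  | MNot p => mso_wf B p
  | MAnd p q | MOr p q | MImp p q => mso_wf B p /\ mso_wf B q
  | MEx1 _ p | MAll1 _ p | MEx2 _ p | MAll2 _ p => mso_wf B p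
  end.

Fixpoint fo_free (n : nat) (p : mso) : Prop :=
  match p with
  | MRel1 _ x => x = n
  | MRel2 _ x y | MEq x y => x = n \/ y = n
  | MIn x _ => x = n
  | MTrue | MFalse => False
  | MNot p => fo_free n p
  | MAnd p q | MOr p q | MImp p q => fo_free n p \/ fo_free n q
  | MEx1 x p | MAll1 x p => x <> n /\ fo_free n p
  | MEx2 _ p | MAll2 _ p => fo_free n p
  end.

Fixpoint so_free (n : nat) (p : mso) : Prop :=
  match p with
  | MRel1 _ _ | MRel2 _ _ _ | MEq _ _ | MTrue | MFalse => False
  | MIn _ X => X = n
  | MNot p => so_free n p
  | MAnd p q | MOr p q | MImp p q => so_free n p \/ so_free n q
  | MEx1 _ p | MAll1 _ p => so_free n p
  | MEx2 X p | MAll2 X p => X <> n /\ so_free n p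
  end.

Definition mso_closed (p : mso) : Prop :=
  forall n, ~ fo_free n p /\ ~ so_free n p.

Record structure : Type := Structure {
  univ : Type;
  rel1 : sym -> univ -> Prop;
  rel2 : sym -> univ -> univ -> Prop }.

Definition upd1 {U} (nu : nat -> option U) (x : nat) (u : U) : nat -> option U :=
  fun y => if y == x then Some u else nu y.
Definition upd2 {U} (nu : nat -> U -> Prop) (X : nat) (S : U -> Prop)
  : nat -> U -> Prop :=
  fun Y => if Y == X then S else nu Y.

(* satisfaction; first-order assignments are partial (so that the empty
   structure is handled); second-order variables range over ALL subsets *)
Arguments Structure : clear implicits.
Unset Implicit Arguments.
Fixpoint sat (A : structure) (nu1 : nat -> option (univ A))
  (nu2 : nat -> univ A -> Prop) (p : mso) : Prop :=
  match p with
  | MRel1 s x => exists u, nu1 x = Some u /\ @rel1 A s u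
  | MRel2 s x y => exists u v, nu1 x = Some u /\ nu1 y = Some v /\ @rel2 A s u v
  | MEq x y => exists u, nu1 x = Some u /\ nu1 y = Some u
  | MIn x X => exists u, nu1 x = Some u /\ nu2 X u
  | MTrue => True
  | MFalse => False
  | MNot p => ~ sat A nu1 nu2 p
  | MAnd p q => sat A nu1 nu2 p /\ sat A nu1 nu2 q
  | MOr p q => sat A nu1 nu2 p \/ sat A nu1 nu2 q
  | MImp p q => sat A nu1 nu2 p -> sat A nu1 nu2 q
  | MEx1 x p => exists u, sat A (upd1 nu1 x u) nu2 p
  | MAll1 x p => forall u, sat A (upd1 nu1 x u) nu2 p
  | MEx2 X p => exists S, sat A nu1 (upd2 nu2 X S) p
  | MAll2 X p => forall S, sat A nu1 (upd2 nu2 X S) p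
  end.

Set Implicit Arguments.
Definition models (A : structure) (p : mso) : Prop :=
  sat A (fun _ => None) (fun _ _ => False) p.

Definition AFG_univ (F G : seq form) : Type :=
  {x : form | exists phi, List.In phi (F ++ G) /\ subf x phi}.

Definition AFG_rel1 (F G : seq form) (s : sym) (x : AFG_univ F G) : Prop :=
  let x := proj1_sig x in
  match s with
  | SVar => exists v, x = Var v
  | SRepr => List.In x (F ++ G)
  | SReprPrem => List.In x F
  | SReprConc => List.In x G
  | SConst f => bf_arity f = 0 /\ x = App f nil
  | SConn _ _ => False
  end.

(* conn_{f,i}(x,y) iff x is the i-th (1-based) argument of f at the root of y *)
Definition AFG_rel2 (F G : seq form) (s : sym) (x y : AFG_univ F G) : Prop :=
  match s with
  | SConn f i => exists args, proj1_sig y = App f args /\ 1 <= i /\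
                   List.nth_error args (i - 1) = Some (proj1_sig x)
  | _ => False
  end.

Definition AFG (F G : seq form) : structure :=
  Structure (AFG_univ F G) (@AFG_rel1 F G) (@AFG_rel2 F G).

From mathcomp Require Import all_boot.
From Stdlib Require List.
From Stdlib Require Import ProofIrrelevance ClassicalEpsilon.

Set Implicit Arguments.
Unset Strict Implicit.
Unset Printing Implicit Defensive.

(* A set X of nodes of A_{F,G} that respects, at every node, the truth table of
   the connective labelling it is exactly the set of subformulae made true by
   the assignment v |-> [Var v \in X]; conversely, the subformulae true under
   any assignment form such a set. So F |= G holds iff every such X containing
   the premises contains the conclusions: a universal set quantifier over a
   first-order condition that lists the finitely many truth-table rows of B. *)

Definition mso_lit (b : bool) (p : mso) : mso := if b then p else MNot p.

Definition mso_conj {T : Type} (g : T -> mso) (s : seq T) : mso :=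
  foldr (fun x acc => MAnd (g x) acc) MTrue s.

(* Throughout, x0 is the current node, x1 one of its arguments and X0 the
   candidate set of true nodes. *)
Definition arg_matches (f : boolfun) (t : (bf_arity f).-tuple bool)
    (i : 'I_(bf_arity f)) : mso :=
  MEx1 1 (MAnd (MRel2 (SConn f i.+1) 1 0) (mso_lit (tnth t i) (MIn 1 0))).

(* For a constant the argument conditions are vacuous, so the node has to be
   recognised by its label. *)
Definition root_is_const (f : boolfun) : mso :=
  if bf_arity f == 0 then MRel1 (SConst f) 0 else MTrue.

Definition row_respected (f : boolfun) (t : (bf_arity f).-tuple bool) : mso :=
  MImp (MAnd (root_is_const f) (mso_conj (arg_matches t) (enum 'I_(bf_arity f))))
       (mso_lit (projT2 f t) (MIn 0 0)).

Definition table_respected (f : boolfun) : mso :=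
  mso_conj (@row_respected f) (enum {: (bf_arity f).-tuple bool}).

Definition theta_imp (B : seq boolfun) : mso :=
  MAll2 0 (MImp (MAnd (MAll1 0 (mso_conj table_respected B))
                      (MAll1 0 (MImp (MRel1 SReprPrem 0) (MIn 0 0))))
                (MAll1 0 (MImp (MRel1 SReprConc 0) (MIn 0 0)))).

Lemma mso_wf_conj B (T : eqType) (g : T -> mso) s :
  (forall x, x \in s -> mso_wf B (g x)) -> mso_wf B (mso_conj g s).
Proof.
elim: s => [|a s IH] wf_g //=; split; first by apply: wf_g; rewrite inE eqxx.
by apply: IH => x xs; apply: wf_g; rewrite inE xs orbT.
Qed.

Lemma mso_wf_lit B b p : mso_wf B p -> mso_wf B (mso_lit b p).
Proof. by case: b. Qed.

Lemma mso_wf_theta_imp B : mso_wf B (theta_imp B).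
Proof.
split; [split|by []]; last by [].
apply: mso_wf_conj => f fB; apply: mso_wf_conj => t _; split; last exact: mso_wf_lit.
split; first by rewrite /root_is_const; case: eqP.
apply: mso_wf_conj => i _; split; last exact: mso_wf_lit.
by split; rewrite // ltn_ord.
Qed.

Fixpoint mso_scoped (fv sv : nat -> Prop) (p : mso) : Prop :=
  match p with
  | MRel1 _ x => fv x
  | MRel2 _ x y | MEq x y => fv x /\ fv y
  | MIn x X => fv x /\ sv X
  | MTrue | MFalse => True
  | MNot p => mso_scoped fv sv p
  | MAnd p q | MOr p q | MImp p q => mso_scoped fv sv p /\ mso_scoped fv sv q
  | MEx1 x p | MAll1 x p => mso_scoped (fun n => n = x \/ fv n) sv p
  | MEx2 X p | MAll2 X p => mso_scoped fv (fun n => n = X \/ sv n) p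
  end.

Lemma mso_scoped_free n fv sv p : mso_scoped fv sv p ->
  (fo_free n p -> fv n) /\ (so_free n p -> sv n).
Proof.
elim: p fv sv => /=.
- by move=> _ x fv sv sc; split=> // <-.
- by move=> _ x y fv sv [sx sy]; split=> [[<-|<-]|].
- by move=> x y fv sv [sx sy]; split=> [[<-|<-]|].
- by move=> x X fv sv [sx sX]; split=> <-.
- by [].
- by [].
- by move=> p IH fv sv /IH.
- by move=> p IHp q IHq fv sv [/IHp[? ?] /IHq[? ?]]; split=> -[]; auto.
- by move=> p IHp q IHq fv sv [/IHp[? ?] /IHq[? ?]]; split=> -[]; auto.
- by move=> p IHp q IHq fv sv [/IHp[? ?] /IHq[? ?]]; split=> -[]; auto.
- by move=> x p IH fv sv /IH[fo so]; split=> // -[xn /fo[E|//]]; case: xn; rewrite E.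
- by move=> x p IH fv sv /IH[fo so]; split=> // -[xn /fo[E|//]]; case: xn; rewrite E.
- by move=> X p IH fv sv /IH[fo so]; split=> // -[Xn /so[E|//]]; case: Xn; rewrite E.
- by move=> X p IH fv sv /IH[fo so]; split=> // -[Xn /so[E|//]]; case: Xn; rewrite E.
Qed.

Lemma mso_scoped_conj fv sv (T : eqType) (g : T -> mso) s :
  (forall x, x \in s -> mso_scoped fv sv (g x)) -> mso_scoped fv sv (mso_conj g s).
Proof.
elim: s => [|a s IH] sc_g //=; split; first by apply: sc_g; rewrite inE eqxx.
by apply: IH => x xs; apply: sc_g; rewrite inE xs orbT.
Qed.

Lemma mso_scoped_lit fv sv b p :
  mso_scoped fv sv p -> mso_scoped fv sv (mso_lit b p).
Proof. by case: b. Qed.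

Lemma mso_closed_theta_imp B : mso_closed (theta_imp B).
Proof.
have sc : mso_scoped (fun _ => False) (fun _ => False) (theta_imp B).
  rewrite /=; split; [split|]; last by auto.
  - apply: mso_scoped_conj => f _; apply: mso_scoped_conj => t _.
    split; last by apply: mso_scoped_lit; split; auto.
    split; first by rewrite /root_is_const; case: ifP => /=; auto.
    apply: mso_scoped_conj => i _ /=; split; first by auto.
    by apply: mso_scoped_lit => /=; auto.
  - by split; auto.
by move=> n; have [fo so] := mso_scoped_free n sc; split=> [/fo|/so].
Qed.

Section Semantics.

Variable A : structure.

Definition respects_tables (B : seq boolfun) (S : univ A -> Prop) : Prop :=
  forall (u : univ A) f, f \in B -> forall t : (bf_arity f).-tuple bool,
    (bf_arity f = 0 -> rel1 (SConst f) u) ->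
    (forall i : 'I_(bf_arity f),
       exists v, rel2 (SConn f i.+1) v u /\ (S v <-> tnth t i)) ->
    (S u <-> projT2 f t).

Lemma sat_conj nu1 nu2 (T : eqType) (g : T -> mso) s :
  sat A nu1 nu2 (mso_conj g s) <-> forall x, x \in s -> sat A nu1 nu2 (g x).
Proof.
elim: s => [|a s IH] /=; first by split=> // _ x; rewrite in_nil.
rewrite IH; split=> [[ga gs] x|gs]; first by rewrite inE => /orP[/eqP->|/gs].
by split=> [|x xs]; apply: gs; rewrite inE ?eqxx ?xs ?orbT.
Qed.

Lemma sat_lit nu1 nu2 b p :
  sat A nu1 nu2 (mso_lit b p) <-> (sat A nu1 nu2 p <-> b).
Proof. by case: b => /=; intuition. Qed.

Lemma sat_MIn nu1 nu2 x X u :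
  nu1 x = Some u -> sat A nu1 nu2 (MIn x X) <-> nu2 X u.
Proof. by move=> /= ->; split=> [[w [[->]]]|]; last exists u. Qed.

Lemma sat_MRel1 nu1 nu2 s x u :
  nu1 x = Some u -> sat A nu1 nu2 (MRel1 s x) <-> rel1 s u.
Proof. by move=> /= ->; split=> [[w [[->]]]|]; last exists u. Qed.

Lemma sat_MRel2 nu1 nu2 s x y u v :
  nu1 x = Some u -> nu1 y = Some v -> sat A nu1 nu2 (MRel2 s x y) <-> rel2 s u v.
Proof.
by move=> /= -> ->; split=> [[u' [v' [[->] [[->]]]]]|]; last exists u, v.
Qed.

Lemma sat_arg_matches nu1 nu2 u f t i :
  nu1 0 = Some u ->
  sat A nu1 nu2 (@arg_matches f t i) <->
  exists v, rel2 (SConn f i.+1) v u /\ (nu2 0 v <-> tnth t i).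
Proof.
move=> nu_u; have nuv_u v : upd1 nu1 1 v 0 = Some u by [].
have nuv_v v : upd1 nu1 1 v 1 = Some v by [].
split=> [[v [uv Sv]]|[v [uv Sv]]]; exists v; split.
- exact/(sat_MRel2 nu2 _ (nuv_v v) (nuv_u v)).
- by rewrite -(sat_MIn nu2 _ (nuv_v v)); apply/sat_lit.
- exact/(sat_MRel2 nu2 _ (nuv_v v) (nuv_u v)).
- by apply/sat_lit; rewrite (sat_MIn nu2 _ (nuv_v v)).
Qed.

Lemma sat_row_respected nu1 nu2 u f t :
  nu1 0 = Some u ->
  sat A nu1 nu2 (@row_respected f t) <->
  ((bf_arity f = 0 -> rel1 (SConst f) u) ->
   (forall i : 'I_(bf_arity f),
      exists v, rel2 (SConn f i.+1) v u /\ (nu2 0 v <-> tnth t i)) ->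
   (nu2 0 u <-> projT2 f t)).
Proof.
move=> nu_u.
have root : sat A nu1 nu2 (root_is_const f) <-> (bf_arity f = 0 -> rel1 (SConst f) u).
  rewrite /root_is_const; case: eqP => [f0|fn0]; last by split=> // _ /fn0.
  by rewrite (sat_MRel1 _ _ nu_u); split=> // /(_ f0).
have args : sat A nu1 nu2 (mso_conj (arg_matches t) (enum 'I_(bf_arity f))) <->
    (forall i : 'I_(bf_arity f),
       exists v, rel2 (SConn f i.+1) v u /\ (nu2 0 v <-> tnth t i)).
  rewrite sat_conj; split=> [all_i i|all_i i _].
    by apply/(sat_arg_matches _ _ _ nu_u)/all_i; rewrite mem_enum.
  exact/(sat_arg_matches _ _ _ nu_u).
rewrite /= root args sat_lit (sat_MIn _ _ nu_u); tauto.
Qed.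

Lemma sat_all_tables nu1 nu2 B :
  sat A nu1 nu2 (MAll1 0 (mso_conj table_respected B)) <->
  respects_tables B (nu2 0).
Proof.
have nu_u u : upd1 nu1 0 u 0 = Some u by [].
split=> [all_u u f fB t|resp u].
  apply/(sat_row_respected _ _ (nu_u u)).
  by move/sat_conj: (all_u u) => /(_ f fB) /sat_conj; apply; rewrite mem_enum.
apply/sat_conj => f fB; apply/sat_conj => t _.
exact/(sat_row_respected _ _ (nu_u u))/resp.
Qed.

Lemma sat_all_rel1_in nu1 nu2 s x X :
  sat A nu1 nu2 (MAll1 x (MImp (MRel1 s x) (MIn x X))) <->
  forall u, rel1 s u -> nu2 X u.
Proof.
have nu_u u : upd1 nu1 x u x = Some u by rewrite /upd1 eqxx.
split=> [all_u u su|su u /(sat_MRel1 nu2 s (nu_u u)) su_u].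
  by apply/(sat_MIn nu2 X (nu_u u))/all_u/(sat_MRel1 nu2 s (nu_u u)).
exact/(sat_MIn nu2 X (nu_u u))/su.
Qed.

Lemma models_theta_imp B :
  models A (theta_imp B) <->
  forall S : univ A -> Prop, respects_tables B S ->
    (forall u, rel1 SReprPrem u -> S u) -> forall u, rel1 SReprConc u -> S u.
Proof.
rewrite /models; split=> H S;
  have rel1_in s := sat_all_rel1_in (fun _ => None) (upd2 (fun _ _ => False) 0 S) s 0 0.
- move=> resp prem; apply/rel1_in/H.
  by split; [apply/sat_all_tables|apply/rel1_in].
- by move=> [/sat_all_tables resp /rel1_in prem]; apply/rel1_in; exact: H resp prem.
Qed.

End Semantics.

Definition form_ind_In (P : form -> Prop) (P_Var : forall v, P (Var v))
    (P_App : forall f args, (forall a, List.In a args -> P a) -> P (App f args)) :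
    forall phi, P phi :=
  fix IH phi := match phi with
  | Var v => P_Var v
  | App f args => P_App f args
      ((fix IH_args (l : seq form) : forall a, List.In a l -> P a :=
          match l with
          | nil => fun a a_l => False_ind _ a_l
          | b :: l' => fun a a_l => match a_l with
                                    | or_introl b_a => eq_ind b P (IH b) a b_a
                                    | or_intror a_l' => IH_args l' a a_l'
                                    end
          end) args)
  end.

Lemma is_Bform_App B f args : is_Bform B (App f args) ->
  [/\ f \in B, size args = bf_arity f & forall a, List.In a args -> is_Bform B a].
Proof.
move=> [fB [size_args Bargs]]; split=> //.
by elim: args Bargs {size_args} => [|b l IH] //= [Bb Bl] a [<-|/IH]; last apply.
Qed.

Lemma is_Bform_subf B x y : subf x y -> is_Bform B y -> is_Bform B x.
Proof. by elim=> // {}x f args a a_args _ IH /is_Bform_App[_ _ /(_ a a_args)]. Qed.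

Lemma subf_trans x y z : subf x y -> subf y z -> subf x z.
Proof.
by move=> + yz; elim: yz => // {}y f args a a_args _ IH /IH; apply: subf_arg.
Qed.

Lemma nth_error_nth_seq (T : Type) (d : T) s i x :
  List.nth_error s i = Some x -> nth d s i = x.
Proof. by elim: s i => [|b s IH] [|i] //= => [[]|/IH]. Qed.

Lemma bf_apply_tuple f (t : (bf_arity f).-tuple bool) :
  bf_apply f (val t) = projT2 f t.
Proof. by rewrite /bf_apply valK. Qed.

Section SubformulaStructure.

Variables (B : seq boolfun) (F G : seq form).
Hypothesis node_Bform : forall u : AFG_univ F G, is_Bform B (proj1_sig u).

Lemma AFG_node_inj (u v : AFG_univ F G) : proj1_sig u = proj1_sig v -> u = v.
Proof. by move=> uv; apply: eq_sig_hprop => // x; apply: proof_irrelevance. Qed.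

Definition AFG_node (phi : form) (phi_FG : List.In phi (F ++ G)) : AFG_univ F G :=
  exist _ phi (ex_intro _ phi (conj phi_FG (subf_refl phi))).

Lemma AFG_arg (u : AFG_univ F G) f args i :
  proj1_sig u = App f args -> i < size args ->
  exists v : AFG_univ F G,
    rel2 (s := AFG F G) (SConn f i.+1) v u /\
    List.nth_error args i = Some (proj1_sig v).
Proof.
case: u => x [phi [phi_FG x_phi]] /= x_f lt_i.
have [a args_a] : exists a, List.nth_error args i = Some a.
  case E : (List.nth_error args i) => [a|]; first by exists a.
  by move/ltP/List.nth_error_Some: lt_i; rewrite E => /(_ erefl).
have a_phi : subf a phi.
  apply: subf_trans x_phi; rewrite x_f.
  exact: subf_arg (List.nth_error_In _ _ args_a) (subf_refl a).
exists (exist _ a (ex_intro _ phi (conj phi_FG a_phi))).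
by split=> //; exists args; rewrite subn1.
Qed.

Definition true_nodes (sigma : nat -> bool) (u : AFG_univ F G) : Prop :=
  eval sigma (proj1_sig u).

Lemma respects_tables_true_nodes sigma :
  respects_tables (A := AFG F G) B (true_nodes sigma).
Proof.
move=> u f fB t leaf args_t; rewrite /true_nodes.
have [args u_f] : exists args, proj1_sig u = App f args.
  case: (posnP (bf_arity f)) => [f0|f_pos]; first by exists nil; case: (leaf f0).
  by have [v [[args [u_f _]] _]] := args_t (Ordinal f_pos); exists args.
have /is_Bform_App[_ size_args _] : is_Bform B (App f args) by rewrite -u_f.
rewrite u_f /=; suff -> : map (eval sigma) args = val t by rewrite bf_apply_tuple.
apply: (@eq_from_nth _ false); first by rewrite size_map size_tuple.
move=> i; rewrite size_map size_args => lt_i.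
have [v [[args' [u_f' [_ args_v]]] v_t]] := args_t (Ordinal lt_i).
move: u_f'; rewrite u_f => -[same_args]; rewrite -same_args subn1 /= in args_v.
rewrite (nth_map (Var 0)) ?size_args // (nth_error_nth_seq _ args_v).
by rewrite -(tnth_nth false t (Ordinal lt_i)); apply/idP/idP => /v_t.
Qed.

Definition var_assignment (S : AFG_univ F G -> Prop) (v : nat) : bool :=
  if excluded_middle_informative (exists w, proj1_sig w = Var v /\ S w)
  then true else false.

Lemma eval_var_assignment S : respects_tables (A := AFG F G) B S ->
  forall u, true_nodes (var_assignment S) u <-> S u.
Proof.
move=> resp; suff eval_S x u : proj1_sig u = x -> (eval (var_assignment S) x <-> S u).
  by move=> u; apply: eval_S.
elim/form_ind_In: x u => [v|f args IH] u u_x /=.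
  rewrite /var_assignment; case: excluded_middle_informative => [[w [w_v Sw]]|no_w].
    by rewrite (@AFG_node_inj u w) ?u_x ?w_v.
  by split=> // Su; case: no_w; exists u.
have /is_Bform_App[fB size_args _] : is_Bform B (App f args) by rewrite -u_x.
have size_eval : size (map (eval (var_assignment S)) args) == bf_arity f.
  by rewrite size_map size_args.
rewrite -[map _ _]/(val (Tuple size_eval)) bf_apply_tuple.
symmetry; apply: (resp u f fB) => [f0|i].
  by split=> //; rewrite u_x; move: size_args; rewrite f0 => /size0nil ->.
have lt_i : i < size args by rewrite size_args.
have [v [uv args_v]] := AFG_arg u_x lt_i.
exists v; split=> //; rewrite (tnth_nth false) /= (nth_map (Var 0)) //.
by rewrite (nth_error_nth_seq _ args_v) -(IH _ (List.nth_error_In _ _ args_v) v).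
Qed.

Lemma entails_iff_respecting_sets :
  entails F G <->
  forall S : AFG_univ F G -> Prop, respects_tables (A := AFG F G) B S ->
    (forall u, List.In (proj1_sig u) F -> S u) ->
    forall u, List.In (proj1_sig u) G -> S u.
Proof.
split=> [FG S resp prem u u_G|sets sigma sigma_F psi psi_G].
  apply/(eval_var_assignment resp)/FG/u_G => phi phi_F.
  have phi_FG := List.in_or_app F G phi (or_introl phi_F).
  exact/(eval_var_assignment resp (AFG_node phi_FG))/prem.
have psi_FG := List.in_or_app F G psi (or_intror psi_G).
have prem (u : AFG_univ F G) : List.In (proj1_sig u) F -> true_nodes sigma u.
  by move/sigma_F.
exact: sets _ (@respects_tables_true_nodes sigma) prem (AFG_node psi_FG) psi_G.
Qed.

End SubformulaStructure.

Theorem lemma2 (B : seq boolfun) :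
  exists theta : mso,
    mso_wf B theta /\ mso_closed theta /\
    forall (Gamma F G : seq form),
      (forall phi, List.In phi Gamma -> is_Bform B phi) ->
      (forall phi, List.In phi F -> List.In phi Gamma) ->
      (forall phi, List.In phi G -> List.In phi Gamma) ->
      (entails F G <-> models (AFG F G) theta).
Proof.
exists (theta_imp B); split; first exact: mso_wf_theta_imp.
split; first exact: mso_closed_theta_imp.
move=> Gamma F G Gamma_B F_Gamma G_Gamma; rewrite models_theta_imp.
apply: entails_iff_respecting_sets => -[x [phi [phi_FG x_phi]]].
apply: is_Bform_subf x_phi _; apply: Gamma_B.
by case: (List.in_app_or _ _ _ phi_FG) => [/F_Gamma|/G_Gamma].
Qed.
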